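(* Let $X$ be a finite $T_0$ topological space, $\mathcal V$ a multivector field on $X$ with $X$ invariant, and $\mathcal M=\{M_p\mid p\in\mathbb P\}$ an indexed family of mutually disjoint subsets of $X$. The following are equivalent: (i) $\mathcal M$ is a Morse decomposition of $X$; (ii) each $M_p$ is a saturated isolated invariant subset of $X$, and $\mathbb P$ admits a partial order $\le$ such that for every essential solution $\gamma$ in $X$ there exist $p,q\in\mathbb P$ with $p\ge q$, $\alpha(\gamma)\subset M_p$ and $\omega(\gamma)\subset M_q$; (iii) each $M_p$ is an isolated invariant subset of $X$, and $\mathbb P$ admits a partial order $\le$ such that for every essential solution $\gamma$ in $X$ either $\operatorname{im}\gamma\subset M_p$ for some $p\in\mathbb P$, or there exist $p,q\in\mathbb P$ with $p>q$, $\alpha(\gamma)\subset M_p$ and $\omega(\gamma)\subset M_q$. In particular, every Morse set in a Morse decomposition is saturated and isolated.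
   Context: Notation: $\operatorname{cl}$ is closure; $A\subset X$ is locally closed if $\operatorname{cl}A\setminus A$ is closed. A multivector field $\mathcal V$ on $X$ is a partition of $X$ into locally closed sets (multivectors); $[x]_{\mathcal V}$ is the multivector containing $x$. A multivector $V$ is critical if $H(\operatorname{cl}V,\operatorname{cl}V\setminus V)$ (relative singular homology) is nontrivial, regular otherwise. $A$ is $\mathcal V$-compatible if it is a union of multivectors; $\langle A\rangle_{\mathcal V}$ is the smallest locally closed $\mathcal V$-compatible set containing $A$. $\Pi_{\mathcal V}(x)=\operatorname{cl}\{x\}\cup[x]_{\mathcal V}$. A solution is a partial map $\gamma:\mathbb Z\nrightarrow X$ with domain an integer interval and $\gamma(t+1)\in\Pi_{\mathcal V}(\gamma(t))$; a path has finite domain; a full solution has domain $\mathbb Z$. $\alpha(\gamma)=\langle\bigcap_{t\le0}\gamma((-\infty,t])\rangle_{\mathcal V}$, $\omega(\gamma)=\langle\bigcap_{t\ge0}\gamma([t,\infty))\rangle_{\mathcal V}$. A full solution is essential unless $\alpha(\gamma)$ or $\omega(\gamma)$ lies in a single regular multivector; an essential solution in $A$ is one with image in $A$. $\operatorname{Inv}S$ is the set of $x\in S$ with an essential solution $\gamma$ in $S$, $\gamma(0)=x$; $S$ is invariant if $\operatorname{Inv}S=S$. An invariant $S$ is isolated invariant if there is a closed $N\supset\Pi_{\mathcal V}(S)$ such that every path in $N$ with endpoints in $S$ has image in $S$. A full solution is a link from $S_1$ to $S_2$ if $\alpha(\gamma)\cap S_1\ne\emptyset\ne\omega(\gamma)\cap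 S_2$. A Morse predecomposition of $X$ is an indexed family of mutually disjoint isolated invariant subsets $\{M_p\mid p\in\mathbb P\}$ such that every essential solution in $X$ is a link from some $M_p$ to some $M_q$. A preorder $\le$ on $\mathbb P$ is admissible if a link from $M_p$ to $M_q$ implies $q\le p$. An invariant $T\subset X$ is saturated if every essential solution $\gamma$ in $X$ with $\alpha(\gamma)\subset T$ and $\omega(\gamma)\subset T$ has $\operatorname{im}\gamma\subset T$. A Morse decomposition of $X$ is a Morse predecomposition all of whose members are saturated and for which some admissible preorder is a partial order. *)

From HB Require Import structures.
From mathcomp Require Import all_boot all_order all_algebra.
From mathcomp Require Import all_classical all_reals all_analysis.

Set Implicit Arguments.
Unset Strict Implicit.
Unset Printing Implicit Defensive.

Import Order.TTheory GRing.Theory Num.Theory.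
Import numFieldNormedType.Exports.
Local Open Scope classical_set_scope.
Local Open Scope ring_scope.

(* A singular n-simplex is represented by a map s : 'rV[R]_(n.+1) -> T *)
(* continuous on the standard simplex; two maps are identified when    *)
(* they agree on the standard simplex (this identification is built in *)
(* to the coefficient function [coef]).                                *)
Section SingularHomology.
Variables (R : realType) (T : topologicalType).

Definition std_simplex (n : nat) : set 'rV[R]_(n.+1) :=
  [set x | (forall i, 0 <= x ord0 i) /\ \sum_(i < n.+1) x ord0 i = 1].

Definition face_incl (n : nat) (i : 'I_(n.+2)) (x : 'rV[R]_(n.+1)) : 'rV[R]_(n.+2) :=
  \row_j match unlift i j with Some k => x ord0 k | None => 0 end.

Definition sing_map (n : nat) := 'rV[R]_(n.+1) -> T.

Definition chain (n : nat) := seq (int * sing_map n).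

Definition is_simplex_in (n : nat) (A : set T) (s : sing_map n) : Prop :=
  {within @std_simplex n, continuous (s : 'rV[R]_(n.+1) -> T)} /\ s @` @std_simplex n `<=` A.

Definition chain_in (n : nat) (A : set T) (c : chain n) : Prop :=
  forall p, p \in c -> is_simplex_in A p.2.

Definition same_simplex (n : nat) (s t : sing_map n) : Prop :=
  forall x, @std_simplex n x -> s x = t x.

Definition coef (n : nat) (c : chain n) (t : sing_map n) : int :=
  \sum_(p <- c) (if `[< same_simplex p.2 t >] then p.1 else 0).

Definition boundary (n : nat) (c : chain n.+1) : chain n :=
  flatten [seq [seq (((-1) ^+ i * p.1)%R, p.2 \o face_incl i) | i : 'I_(n.+2)]
          | p <- c].

Definition rel_cycle (A B : set T) (n : nat) : chain n -> Prop :=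
  match n return chain n -> Prop with
  | 0 => fun c => chain_in A c
  | m.+1 => fun c => chain_in A c /\
      exists e : chain m, chain_in B e /\ coef (boundary c) = coef e
  end.

Definition rel_boundary (A B : set T) (n : nat) (c : chain n) : Prop :=
  exists (d : chain n.+1) (e : chain n),
    [/\ chain_in A d, chain_in B e &
        forall t, coef c t = coef (boundary d) t + coef e t].

Definition rel_homology_nontrivial (A B : set T) : Prop :=
  exists (n : nat) (c : chain n), rel_cycle A B c /\ ~ rel_boundary A B c.

End SingularHomology.

Section Dynamics.
Variables (R : realType) (T : topologicalType).

Definition locally_closed (A : set T) : Prop := closed (closure A `\` A).

Definition multivector_field (V : set (set T)) : Prop :=
  [/\ (forall W, V W -> W !=set0 /\ locally_closed W),
      (forall W W', V W -> V W' -> W `&` W' !=set0 -> W = W') &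
      (forall x, exists2 W, V W & W x)].

Variable V : set (set T).

Definition mv_of (x : T) : set T := \bigcup_(W in [set W | V W /\ W x]) W.

Definition critical (W : set T) : Prop :=
  rel_homology_nontrivial R (closure W) (closure W `\` W).
Definition regular (W : set T) : Prop := ~ critical W.

Definition compatible (A : set T) : Prop := forall x, A x -> mv_of x `<=` A.

Definition lc_hull (A : set T) : set T :=
  \bigcap_(B in [set B | A `<=` B /\ compatible B /\ locally_closed B]) B.

Definition Pi (x : T) : set T := closure [set x] `|` mv_of x.

Definition PiS (S : set T) : set T := \bigcup_(x in S) Pi x.

Definition full_solution (g : int -> T) : Prop := forall t, Pi (g t) (g (t + 1)).

Definition path_sol (n : nat) (g : nat -> T) : Prop :=
  forall k, (k < n)%N -> Pi (g k) (g k.+1).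

Definition alpha (g : int -> T) : set T :=
  lc_hull (\bigcap_(t in [set t : int | t <= 0]) (g @` [set s | s <= t])).
Definition omega (g : int -> T) : set T :=
  lc_hull (\bigcap_(t in [set t : int | 0 <= t]) (g @` [set s | t <= s])).

Definition essential (g : int -> T) : Prop :=
  full_solution g /\
  ~ (exists2 W, V W & regular W /\ (alpha g `<=` W \/ omega g `<=` W)).

Definition essential_in (A : set T) (g : int -> T) : Prop :=
  essential g /\ range g `<=` A.

Definition Inv (S : set T) : set T :=
  [set x | S x /\ exists g, essential_in S g /\ g 0 = x].

Definition invariant_set (S : set T) : Prop := Inv S = S.

Definition isolated_invariant (S : set T) : Prop :=
  invariant_set S /\
  exists N : set T, [/\ closed N, PiS S `<=` N &
    forall (n : nat) (g : nat -> T), path_sol n g ->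
      (forall k, (k <= n)%N -> N (g k)) -> S (g 0%N) -> S (g n) ->
      forall k, (k <= n)%N -> S (g k)].

Definition link (S1 S2 : set T) (g : int -> T) : Prop :=
  full_solution g /\ alpha g `&` S1 !=set0 /\ omega g `&` S2 !=set0.

Definition mutually_disjoint (P : Type) (M : P -> set T) : Prop :=
  forall p q, p <> q -> M p `&` M q = set0.

Definition morse_predecomposition (P : Type) (M : P -> set T) : Prop :=
  [/\ mutually_disjoint M, (forall p, isolated_invariant (M p)) &
      forall g, essential_in setT g -> exists p q, link (M p) (M q) g].

Definition preorder_rel (P : Type) (le : P -> P -> Prop) : Prop :=
  (forall p, le p p) /\ (forall p q r, le p q -> le q r -> le p r).

Definition partial_order_rel (P : Type) (le : P -> P -> Prop) : Prop :=
  preorder_rel le /\ (forall p q, le p q -> le q p -> p = q).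

Definition admissible (P : Type) (M : P -> set T) (le : P -> P -> Prop) : Prop :=
  preorder_rel le /\
  forall p q g, link (M p) (M q) g -> le q p.

Definition saturated (S : set T) : Prop :=
  invariant_set S /\
  forall g, essential_in setT g -> alpha g `<=` S -> omega g `<=` S -> range g `<=` S.

Definition morse_decomposition (P : Type) (M : P -> set T) : Prop :=
  [/\ morse_predecomposition M, (forall p, saturated (M p)) &
      exists le, admissible M le /\ partial_order_rel le].

End Dynamics.

From Pilot Require Import Defs.
From HB Require Import structures.
From mathcomp Require Import all_boot all_order all_algebra.
From mathcomp Require Import all_classical all_reals all_analysis.
From mathcomp Require Import zify.
From Stdlib Require Import Relation_Operators Operators_Properties.
Import Order.TTheory GRing.Theory Num.Theory.
Set Implicit Arguments.
Unset Strict Implicit.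
Unset Printing Implicit Defensive.
Local Open Scope classical_set_scope.
Local Open Scope ring_scope.

(* Since X is finite, the sets [past_limit g] and [future_limit g] whose
   hulls are alpha(g) and omega(g) are nonempty, and any two of their points
   are joined by Pi-paths in both directions; so is every point of their
   hulls, because "reachable from A and reaching A" is a V-compatible,
   locally closed condition.  Inserting such loops into an essential solution
   of a saturated set S shows that S contains alpha(g) or omega(g) as soon as
   it meets it.  Conversely, an arbitrary link between isolated invariant
   sets becomes an essential one: a half whose limit set lies in a regular
   multivector W is replaced by an essential solution of the Morse set, which
   contains W since isolated invariant sets are V-compatible. *)

Section LimitSets.
Variable T : eqType.
Implicit Types g h : int -> T.

Definition past_limit g : set T :=
  \bigcap_(t in [set t : int | t <= 0]) (g @` [set s | s <= t]).
Definition future_limit g : set T :=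
  \bigcap_(t in [set t : int | 0 <= t]) (g @` [set s | t <= s]).

Lemma future_limitE g : future_limit g = past_limit (g \o -%R).
Proof.
apply/seteqP; split=> x gx t /= t_bound.
  have [|s /= s_ge <-] := gx (- t); first by rewrite /=; lia.
  by exists (- s); rewrite /= ?opprK //; lia.
have [|s /= s_le <-] := gx (- t); first by rewrite /=; lia.
by exists (- s) => //=; lia.
Qed.

Lemma finite_lower_bound (Q : T -> int -> Prop) : finite_set [set: T] ->
    (forall x, exists t, forall s, s <= t -> Q x s) ->
  exists t, forall x s, s <= t -> Q x s.
Proof.
move=> /finite_seqP[l lT] evQ.
suff [t Qt] : exists t, forall x, x \in l -> forall s, s <= t -> Q x s.
  by exists t => x; apply: Qt; have : [set: T] x by []; rewrite lT.
elim: l {lT} => [|a l [t Qt]]; first by exists 0.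
have [ta Qa] := evQ a.
exists (Num.min t ta) => x; rewrite inE => /predU1P[-> | xl] s;
  rewrite le_min => /andP[st sta]; [exact: Qa | exact: Qt].
Qed.

Lemma past_limit_neq0 g : finite_set [set: T] -> past_limit g !=set0.
Proof.
move=> finT; apply: contrapT => none.
have avoid x : exists t, forall s, s <= t -> g s <> x.
  have /existsNP[t /not_implyP[_ miss]] : ~ past_limit g x.
    by move=> gx; apply: none; exists x.
  by exists t => s st gsx; apply: miss; exists s.
have [t gt] := finite_lower_bound finT avoid.
exact: gt (g t) t (lexx t) erefl.
Qed.

Lemma future_limit_neq0 g : finite_set [set: T] -> future_limit g !=set0.
Proof. by rewrite future_limitE; apply: past_limit_neq0. Qed.

Lemma past_limit_shift g h c t0 : (forall t, t <= t0 -> h t = g (t + c)) ->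
  past_limit h = past_limit g.
Proof.
move=> hg; apply/seteqP; split=> x hx t /= t_le.
  have [|s /= s_le <-] := hx (t - `|c| - `|t0|); first by rewrite /=; lia.
  by exists (s + c); rewrite /= ?hg //; lia.
have [|s /= s_le <-] := hx (t + c - `|c| - `|t0| - 1); first by rewrite /=; lia.
by exists (s - c); rewrite /= ?hg ?subrK //; lia.
Qed.

Lemma future_limit_shift g h c t0 : (forall t, t0 <= t -> h t = g (t + c)) ->
  future_limit h = future_limit g.
Proof.
move=> hg; rewrite !future_limitE; apply: (@past_limit_shift _ _ (- c) (- t0)).
by move=> t t_le /=; rewrite hg ?opprD ?opprK //; lia.
Qed.

Lemma past_limit_range g : past_limit g `<=` range g.
Proof. by move=> x /(_ 0 (lexx _)) [s _ <-]; exists s. Qed.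

Lemma future_limit_range g : future_limit g `<=` range g.
Proof. by move=> x /(_ 0 (lexx _)) [s _ <-]; exists s. Qed.

End LimitSets.

Section FiniteSpace.
Variable T : topologicalType.
Hypothesis finT : finite_set [set: T].

Lemma closure_points (S : set T) z :
  closure S z -> exists2 x, S x & closure [set x] z.
Proof.
have clS : closure S `<=` \bigcup_(x in S) closure [set x].
  rewrite [X in _ `<=` X](closure_id _).1; last first.
    apply: closed_bigcup => [|x _]; last exact: closed_closure.
    exact: sub_finite_set finT.
  by apply: closureS => x Sx; exists x => //; apply: subset_closure.
by move=> /clS[x Sx xz]; exists x.
Qed.

(* The hypothesis says that C is convex for the specialization preorder. *)
Lemma locally_closed_convex (C : set T) :
    (forall z u v, C z -> closure [set z] u -> closure [set u] v -> C v -> C u) ->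
  locally_closed C.
Proof.
move=> convC; apply/closure_id/seteqP; split; first exact: subset_closure.
move=> v clv; have clCv : closure C v.
  rewrite (closure_id (closure C)).1; last exact: closed_closure.
  by apply: closureS clv => y [].
split=> // Cv; have [u [clCu Cu] uv] := closure_points clv.
have [z Cz zu] := closure_points clCu.
exact: Cu (convC z u v Cz zu uv Cv).
Qed.

End FiniteSpace.

Section Dynamics.
Variables (R : realType) (T : topologicalType) (V : set (set T)).
Hypothesis finT : finite_set [set: T].
Hypothesis mvf : multivector_field V.
Implicit Types (g h : int -> T) (A B S W : set T).

Local Notation reach := (clos_refl_trans T (Pi V)).
#[local] Arguments rt_refl {A R x}.
#[local] Arguments rt_step {A R x y}.
#[local] Arguments rt_trans {A R x y z}.

Lemma mv_ofE x W : V W -> W x -> mv_of V x = W.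
Proof.
case: mvf => _ mv_disj _ VW Wx; apply/seteqP; split; last by move=> y Wy; exists W.
move=> y [W' [VW' W'x] W'y].
by rewrite (mv_disj W W') //; exists x.
Qed.

Lemma mv_of_sym x y : mv_of V x y -> mv_of V y x.
Proof. by case=> W [VW Wx] Wy; rewrite (mv_ofE VW Wy). Qed.

Lemma Pi_refl x : Pi V x x.
Proof. by left; apply: subset_closure. Qed.

Lemma Pi_closure x y : closure [set x] y -> Pi V x y.
Proof. by left. Qed.

Lemma Pi_mv x y : mv_of V x y -> Pi V x y.
Proof. by right. Qed.

Lemma lc_hull_sub A B :
  A `<=` B -> compatible V B -> locally_closed B -> lc_hull V A `<=` B.
Proof. by move=> AB cB lB x; apply. Qed.

Lemma sub_lc_hull A : A `<=` lc_hull V A.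
Proof. by move=> x Ax B [AB _]; apply: AB. Qed.

Lemma reach_solution g s s' : full_solution V g -> s <= s' -> reach (g s) (g s').
Proof.
move=> gsol le_ss'; have -> : s' = s + (`|s' - s|%N)%:Z by lia.
elim: `|s' - s|%N => [|n IH]; first by rewrite addr0; apply: rt_refl.
apply: rt_trans IH (rt_step _).
have -> : s + n.+1%:Z = s + n%:Z + 1 by lia.
exact: gsol.
Qed.

Lemma past_limit_reach g : full_solution V g ->
  forall a b, past_limit g a -> past_limit g b -> reach a b.
Proof.
move=> gsol a b ga /(_ 0 (lexx _))[sb /= sb_le <-].
have [sa /= sa_le <-] := ga sb sb_le.
exact: reach_solution.
Qed.

Lemma future_limit_reach g : full_solution V g ->
  forall a b, future_limit g a -> future_limit g b -> reach a b.
Proof.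
move=> gsol a b /(_ 0 (lexx _))[sa /= sa_ge <-] gb.
have [sb /= sb_ge <-] := gb sa sa_ge.
exact: reach_solution.
Qed.

Lemma alpha_shift g h c t0 : (forall t, t <= t0 -> h t = g (t + c)) ->
  alpha V h = alpha V g.
Proof. by move=> hg; rewrite /alpha -/(past_limit h) (past_limit_shift hg). Qed.

Lemma omega_shift g h c t0 : (forall t, t0 <= t -> h t = g (t + c)) ->
  omega V h = omega V g.
Proof. by move=> hg; rewrite /omega -/(future_limit h) (future_limit_shift hg). Qed.

Lemma alpha_neq0 g : alpha V g !=set0.
Proof. by have [x gx] := past_limit_neq0 g finT; exists x; apply: sub_lc_hull. Qed.

Lemma omega_neq0 g : omega V g !=set0.
Proof. by have [x gx] := future_limit_neq0 g finT; exists x; apply: sub_lc_hull. Qed.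

Lemma alpha_sub g S : compatible V S -> locally_closed S -> range g `<=` S ->
  alpha V g `<=` S.
Proof. by move=> cS lS gS; apply: lc_hull_sub => // x /past_limit_range/gS. Qed.

Lemma omega_sub g S : compatible V S -> locally_closed S -> range g `<=` S ->
  omega V g `<=` S.
Proof. by move=> cS lS gS; apply: lc_hull_sub => // x /future_limit_range/gS. Qed.

(* The paths x -> y -> x below, and z -> u -> v in the next lemma, stay in the
   isolating neighbourhood N and have both endpoints in S. *)
Lemma isolated_compatible S : isolated_invariant R V S -> compatible V S.
Proof.
case=> _ [N [_ PiN isoN]] x Sx y xy.
pose g k := nth x [:: x; y; x] k.
apply: (isoN 2%N g _ _ Sx Sx 1%N isT).
  by case=> [|[|//]] _ /=; apply: Pi_mv => //; apply: mv_of_sym.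
by case=> [|[|[|//]]] _ /=; apply: PiN; exists x => //; apply: Pi_refl || apply: Pi_mv.
Qed.

Lemma isolated_locally_closed S : isolated_invariant R V S -> locally_closed S.
Proof.
case=> _ [N [_ PiN isoN]]; apply: locally_closed_convex => // z u v Sz zu uv Sv.
pose g k := nth z [:: z; u; v] k.
apply: (isoN 2%N g _ _ Sz Sv 1%N isT).
  by case=> [|[|//]] _ /=; apply: Pi_closure.
case=> [|[|[|//]]] _ /=; apply: PiN.
- by exists z => //; apply: Pi_refl.
- by exists z => //; apply: Pi_closure.
- by exists v => //; apply: Pi_refl.
Qed.

Lemma isolated_mv_sub S W A : isolated_invariant R V S -> V W ->
  A `<=` W -> A `&` S !=set0 -> W `<=` S.
Proof.
move=> isoS VW AW [z [Az Sz]]; rewrite -(mv_ofE VW (AW z Az)).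
exact: isolated_compatible Sz.
Qed.

Lemma invariant_solution S x : invariant_set R V S -> S x ->
  exists s, [/\ essential R V s, range s `<=` S & s 0 = x].
Proof.
move=> invS Sx; have : Defs.Inv R V S x by rewrite invS.
by case=> _ [s [[ess sS] s0]]; exists s.
Qed.

Definition forward_solution g := forall t, 0 <= t -> Pi V (g t) (g (t + 1)).

Definition splice g1 g2 t : T := if t <= 0 then g1 t else g2 t.

Lemma splice_l g1 g2 t : t <= 0 -> splice g1 g2 t = g1 t.
Proof. by rewrite /splice => ->. Qed.

Lemma splice_r g1 g2 t : g1 0 = g2 0 -> 0 <= t -> splice g1 g2 t = g2 t.
Proof.
rewrite /splice => g12 t_ge; case: ifP => // t_le.
by have -> : t = 0 by lia.
Qed.

Lemma splice_full_solution g1 g2 : full_solution V g1 -> forward_solution g2 ->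
  g1 0 = g2 0 -> full_solution V (splice g1 g2).
Proof.
move=> g1sol g2fwd g12 t; have [t_lt|t_ge] := ltrP t 0.
  by rewrite !splice_l; [apply: g1sol | lia | lia].
by rewrite !splice_r //; [apply: g2fwd | lia].
Qed.

Lemma prepend_path x z g : reach x z -> forward_solution g -> g 0 = z ->
  exists g' (n : nat),
    [/\ forward_solution g', g' 0 = x & forall t, 0 <= t -> g' (t + n%:Z) = g t].
Proof.
move=> xz gfwd; elim: {xz}(clos_rt_rt1n _ _ _ _ xz) => [a | a b c ab _ IH] g0.
  by exists g, 0%N; split=> // t _; rewrite addr0.
have [g' [n [g'fwd g'0 g'g]]] := IH g0.
exists (fun t => if t <= 0 then a else g' (t - 1)), n.+1; split=> //.
- move=> t t_ge /=; case: ifP => t_le; case: ifP => t1_le; try lia.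
    have -> : t + 1 - 1 = 0 by lia.
    by rewrite g'0.
  have -> : t + 1 - 1 = (t - 1) + 1 by lia.
  by apply: g'fwd; lia.
- move=> t t_ge /=; case: ifP => t_le; first by lia.
  by rewrite -g'g //; congr g'; lia.
Qed.

Lemma lc_hull_reach A : lc_hull V A `<=`
  [set z | (exists2 a, A a & reach a z) /\ (exists2 a, A a & reach z a)].
Proof.
apply: lc_hull_sub.
- by move=> a Aa; split; exists a => //; apply: rt_refl.
- move=> z [[a Aa az] [a' Aa' za']] w zw; split.
    by exists a => //; apply: rt_trans az (rt_step (Pi_mv zw)).
  by exists a' => //; apply: rt_trans (rt_step (Pi_mv (mv_of_sym zw))) za'.
- apply: locally_closed_convex => // z u v [[a Aa az] _] zu uv [_ [a' Aa' va']].
  split; [exists a | exists a'] => //.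
    exact: rt_trans az (rt_step (Pi_closure zu)).
  exact: rt_trans (rt_step (Pi_closure uv)) va'.
Qed.

(* The loop y ->* x ->* y is inserted into an essential solution through y
   without changing its limit sets. *)
Lemma saturated_cycle S x y : saturated R V S -> compatible V S ->
  locally_closed S -> S y -> reach y x -> reach x y -> S x.
Proof.
move=> [invS satS] cS lS Sy yx xy.
have [s [ess sS s0]] := invariant_solution invS Sy.
have ssol : full_solution V s by case: ess.
have [g1 [n1 [g1fwd g10 g1s]]] := prepend_path xy (fun t _ => ssol t) s0.
have [g2 [n2 [g2fwd g20 g2g1]]] := prepend_path yx g1fwd g10.
have s_g2 : s 0 = g2 0 by rewrite s0 g20.
have alpha_h : alpha V (splice s g2) = alpha V s.
  by apply: (alpha_shift (c := 0) (t0 := 0)) => t t_le; rewrite addr0 splice_l.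
have omega_h : omega V (splice s g2) = omega V s.
  apply: (omega_shift (c := - (n2%:Z + n1%:Z)) (t0 := n2%:Z + n1%:Z)) => t t_ge.
  rewrite splice_r //; last by lia.
  have -> : t = (t - n2%:Z - n1%:Z + n1%:Z) + n2%:Z by lia.
  rewrite g2g1 ?g1s; try lia.
  by congr s; lia.
have hS : range (splice s g2) `<=` S.
  apply: satS; last by rewrite omega_h; apply: omega_sub.
    split=> //; split; first exact: splice_full_solution s_g2.
    by rewrite alpha_h omega_h; case: ess.
  by rewrite alpha_h; apply: alpha_sub.
have <- : splice s g2 n2%:Z = x by rewrite splice_r // -(add0r n2%:Z) g2g1 // g10.
exact/hS/imageT.
Qed.

Lemma saturated_lc_hull_sub A S : (forall a b, A a -> A b -> reach a b) ->
  saturated R V S -> compatible V S -> locally_closed S ->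
  lc_hull V A `&` S !=set0 -> lc_hull V A `<=` S.
Proof.
move=> Arec satS cS lS [y [Ay Sy]]; apply: lc_hull_sub => // x Ax.
have [[a1 A1 a1y] [a2 A2 ya2]] := lc_hull_reach Ay.
apply: (saturated_cycle satS cS lS Sy).
  exact: rt_trans ya2 (Arec _ _ A2 Ax).
exact: rt_trans (Arec _ _ Ax A1) a1y.
Qed.

Definition alpha_essential g := ~ exists2 W, V W & regular R W /\ alpha V g `<=` W.
Definition omega_essential g := ~ exists2 W, V W & regular R W /\ omega V g `<=` W.

Lemma essentialE g : essential R V g <->
  [/\ full_solution V g, alpha_essential g & omega_essential g].
Proof.
split=> [[gsol ess] | [gsol aess oess]].
  by split=> // -[W VW [rW gW]]; apply: ess; exists W => //; split=> //; [left | right].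
by split=> // -[W VW [rW [gW | gW]]]; [apply: aess | apply: oess]; exists W.
Qed.

Lemma link_alpha_essential S g : isolated_invariant R V S -> full_solution V g ->
    alpha V g `&` S !=set0 ->
  exists h, [/\ full_solution V h, alpha V h `&` S !=set0,
             omega V h = omega V g & alpha_essential h].
Proof.
move=> isoS gsol gS.
have [ess | /contrapT[W VW [_ gW]]] := pselect (alpha_essential g); first by exists g.
have WS := isolated_mv_sub isoS VW gW gS.
have [a ga] := past_limit_neq0 g finT.
have [ta _ gta] := ga 0 (lexx _).
have [s [sess sS s0]] := invariant_solution isoS.1 (WS a (gW a (sub_lc_hull ga))).
have [ssol s_alpha _] := (essentialE s).1 sess.
pose g' t := g (t + ta).
have s_g' : s 0 = g' 0 by rewrite s0 /g' add0r.
have alpha_h : alpha V (splice s g') = alpha V s.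
  by apply: (alpha_shift (c := 0) (t0 := 0)) => t t_le; rewrite addr0 splice_l.
exists (splice s g'); split.
- by apply: splice_full_solution s_g' => // t _; rewrite /g' addrAC; apply: gsol.
- rewrite alpha_h; have [b sb] := past_limit_neq0 s finT.
  by exists b; split; [exact: sub_lc_hull | exact/sS/past_limit_range].
- by apply: (omega_shift (c := ta) (t0 := 0)) => t t_ge; rewrite splice_r.
- by rewrite /alpha_essential alpha_h.
Qed.

Lemma link_omega_essential S g : isolated_invariant R V S -> full_solution V g ->
    omega V g `&` S !=set0 ->
  exists h, [/\ full_solution V h, omega V h `&` S !=set0,
             alpha V h = alpha V g & omega_essential h].
Proof.
move=> isoS gsol gS.
have [ess | /contrapT[W VW [_ gW]]] := pselect (omega_essential g); first by exists g.
have WS := isolated_mv_sub isoS VW gW gS.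
have [a ga] := future_limit_neq0 g finT.
have [ta _ gta] := ga 0 (lexx _).
have [s [sess sS s0]] := invariant_solution isoS.1 (WS a (gW a (sub_lc_hull ga))).
have [ssol _ s_omega] := (essentialE s).1 sess.
pose g' t := g (t + ta).
have g'_s : g' 0 = s 0 by rewrite s0 /g' add0r.
have omega_h : omega V (splice g' s) = omega V s.
  by apply: (omega_shift (c := 0) (t0 := 0)) => t t_ge; rewrite addr0 splice_r.
exists (splice g' s); split.
- apply: splice_full_solution g'_s => [t | t _]; last exact: ssol.
  by rewrite /g' addrAC; apply: gsol.
- rewrite omega_h; have [b sb] := future_limit_neq0 s finT.
  by exists b; split; [exact: sub_lc_hull | exact/sS/future_limit_range].
- by apply: (alpha_shift (c := ta) (t0 := 0)) => t t_le; rewrite splice_l.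
- by rewrite /omega_essential omega_h.
Qed.

Lemma link_essential S1 S2 g :
    isolated_invariant R V S1 -> isolated_invariant R V S2 -> link V S1 S2 g ->
  exists h, [/\ essential R V h, alpha V h `&` S1 !=set0 & omega V h `&` S2 !=set0].
Proof.
move=> iso1 iso2 [gsol [gS1 gS2]].
have [g1 [g1sol g1S1 g1_omega g1_alpha]] := link_alpha_essential iso1 gsol gS1.
have [|h [hsol hS2 h_alpha h_omega]] := link_omega_essential iso2 g1sol.
  by rewrite g1_omega.
exists h; split=> //; last by rewrite h_alpha.
by apply/essentialE; split=> //; rewrite /alpha_essential h_alpha.
Qed.

End Dynamics.

Section MorseDecomposition.
Variables (R : realType) (T : topologicalType) (V : set (set T)).
Variables (P : Type) (M : P -> set T).
Hypothesis finT : finite_set [set: T].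
Hypothesis mvf : multivector_field V.
Hypothesis disjM : mutually_disjoint M.

Definition limits_ordered (le : P -> P -> Prop) :=
  forall g, essential_in R V setT g ->
    exists p q, [/\ le q p, alpha V g `<=` M p & omega V g `<=` M q].

Definition limits_strictly_ordered (le : P -> P -> Prop) :=
  forall g, essential_in R V setT g ->
    (exists p, range g `<=` M p) \/
    exists p q, [/\ le q p, q <> p, alpha V g `<=` M p & omega V g `<=` M q].

Lemma mutually_disjoint_index p q (A : set T) :
  A `&` M p !=set0 -> A `<=` M q -> p = q.
Proof.
move=> [x [Ax Mpx]] AMq; apply: contrapT => pq.
have : (M p `&` M q) x by split=> //; apply: AMq.
by rewrite (disjM pq).
Qed.

Lemma morse_limits_ordered : morse_decomposition R V M ->
  (forall p, saturated R V (M p) /\ isolated_invariant R V (M p)) /\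
  exists le, partial_order_rel le /\ limits_ordered le.
Proof.
case=> -[_ isoM linkM] satM [le [[_ admM] le_po]].
split=> [p | ]; first by split.
exists le; split=> // g gess.
have gsol : full_solution V g by case: gess => -[].
have [p [q gpq]] := linkM g gess.
have cM r := isolated_compatible mvf (isoM r).
have lM r := isolated_locally_closed finT (isoM r).
exists p, q; split; first exact: admM gpq.
  exact: (saturated_lc_hull_sub finT mvf (past_limit_reach gsol)
            (satM p) (cM p) (lM p) gpq.2.1).
exact: (saturated_lc_hull_sub finT mvf (future_limit_reach gsol)
          (satM q) (cM q) (lM q) gpq.2.2).
Qed.

Lemma limits_ordered_morse le :
    (forall p, saturated R V (M p) /\ isolated_invariant R V (M p)) ->
    partial_order_rel le -> limits_ordered le ->
  morse_decomposition R V M.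
Proof.
move=> satM le_po leM; split.
- split=> // [p | g gess]; first by case: (satM p).
  have [p [q [_ gp gq]]] := leM g gess.
  exists p, q; split; first by case: gess => -[].
  split; first by rewrite setIidl //; exact: alpha_neq0 V finT g.
  by rewrite setIidl //; exact: omega_neq0 V finT g.
- by move=> p; case: (satM p).
exists le; split=> //; split=> [|p q g gpq]; first exact: le_po.1.
have [h [hess hp hq]] := link_essential finT mvf (satM p).2 (satM q).2 gpq.
have [p' [q' [le_qp hp' hq']]] := leM h (conj hess (@subsetT _ _)).
by rewrite (mutually_disjoint_index hp hp') (mutually_disjoint_index hq hq').
Qed.

Lemma morse_decompositionP : morse_decomposition R V M <->
  (forall p, saturated R V (M p) /\ isolated_invariant R V (M p)) /\
  exists le, partial_order_rel le /\ limits_ordered le.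
Proof.
split; first exact: morse_limits_ordered.
by case=> satM [le [le_po leM]]; apply: limits_ordered_morse le_po leM.
Qed.

Lemma limits_ordered_strict le : (forall p, saturated R V (M p)) ->
  limits_ordered le -> limits_strictly_ordered le.
Proof.
move=> satM leM g gess; have [p [q [le_qp gp gq]]] := leM g gess.
have [qp | qp] := pselect (q = p); last by right; exists p, q.
by left; exists p; rewrite qp in gq; exact: (satM p).2 g gess gp gq.
Qed.

Lemma strict_limits_ordered le : (forall p, isolated_invariant R V (M p)) ->
  (forall p, le p p) -> limits_strictly_ordered le -> limits_ordered le.
Proof.
move=> isoM le_refl leM g gess.
have [[p gp] | [p [q [le_qp _ gp gq]]]] := leM g gess; last by exists p, q.
have cM := isolated_compatible mvf (isoM p).
have lM := isolated_locally_closed finT (isoM p).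
by exists p, p; split; [exact: le_refl | exact: alpha_sub | exact: omega_sub].
Qed.

Lemma strict_limits_saturated le : (forall p, isolated_invariant R V (M p)) ->
  limits_strictly_ordered le -> forall p, saturated R V (M p).
Proof.
move=> isoM leM p; split=> [|g gess gp gq]; first by case: (isoM p).
have gp_meet : alpha V g `&` M p !=set0.
  by rewrite setIidl //; exact: alpha_neq0 V finT g.
have gq_meet : omega V g `&` M p !=set0.
  by rewrite setIidl //; exact: omega_neq0 V finT g.
have [[p' gp'] | [p1 [q1 [_ qp1 gp1 gq1]]]] := leM g gess.
  have cM := isolated_compatible mvf (isoM p').
  have lM := isolated_locally_closed finT (isoM p').
  by rewrite (mutually_disjoint_index gp_meet (alpha_sub cM lM gp')).
case: qp1.
by rewrite -(mutually_disjoint_index gp_meet gp1) (mutually_disjoint_index gq_meet gq1).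
Qed.

Lemma morse_decomposition_strictP : morse_decomposition R V M <->
  (forall p, isolated_invariant R V (M p)) /\
  exists le, partial_order_rel le /\ limits_strictly_ordered le.
Proof.
rewrite morse_decompositionP.
split=> [[satM [le [le_po leM]]] | [isoM [le [le_po leM]]]].
  split=> [p | ]; first exact: (satM p).2.
  by exists le; split=> //; apply: limits_ordered_strict => // p; case: (satM p).
split=> [p | ]; first by split; [exact: strict_limits_saturated leM p | exact: isoM].
by exists le; split=> //; exact: strict_limits_ordered isoM le_po.1.1 leM.
Qed.

End MorseDecomposition.
Theorem theorem4p11 (R : realType) (T : topologicalType)
    (V : set (set T)) (P : Type) (M : P -> set T) :
  finite_set [set: T] -> kolmogorov_space T ->
  multivector_field V -> invariant_set R V [set: T] ->
  mutually_disjoint M ->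
  [/\ morse_decomposition R V M <->
        ((forall p, saturated R V (M p) /\ isolated_invariant R V (M p)) /\
         exists le : P -> P -> Prop, partial_order_rel le /\
           forall g, essential_in R V setT g ->
             exists p q, [/\ le q p, alpha V g `<=` M p & omega V g `<=` M q]),
      morse_decomposition R V M <->
        ((forall p, isolated_invariant R V (M p)) /\
         exists le : P -> P -> Prop, partial_order_rel le /\
           forall g, essential_in R V setT g ->
             (exists p, range g `<=` M p) \/
             exists p q, [/\ le q p, q <> p, alpha V g `<=` M p & omega V g `<=` M q])
    & morse_decomposition R V M ->
        forall p, saturated R V (M p) /\ isolated_invariant R V (M p)].
Proof.
move=> finT _ mvf _ disjM.
split; [exact: morse_decompositionP | exact: morse_decomposition_strictP |].
by case/(morse_decompositionP R finT mvf disjM).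
Qed.
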